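(* Let $G$ be the final graph of the uncoordinated construction (described in the context) on a set $P\subset\mathbb{R}^d$ of $n$ points with parameter $s>1$, let $\alpha$ be the aspect ratio of $P$, and let $\mathcal{W}=\{(P_i,Q_i)\}_{i=1}^m$ be the corresponding greedy WSPD, i.e. one pair $(B_r(p),B_r(q))$ with $r=|pq|/(2s+2)$ for each edge $pq$ of $G$. Then each point $x\in P$ belongs to $P_i\cup Q_i$ for at most $O(s^d\lg\alpha)$ indices $i$, where the implied constant depends only on $d$.
   Context: Fix $d\ge 1$; $|xy|$ is Euclidean distance; $\lg$ is logarithm base 2; $B_r(p)=\{x\in P:|px|\le r\}$. The aspect ratio is $\alpha=\max_{u,v\in P}|uv|/\min_{u\ne v\in P}|uv|$. Uncoordinated construction: start with the graph $G$ on vertex set $P$ with no edges. Every ordered pair $(p,q)$ of distinct points of $P$ is processed exactly once, in an arbitrary order, one at a time. When $(p,q)$ is processed, the edge $pq$ is added to $G$ unless $G$ currently contains an edge whose endpoints can be labeled $p',q'$ with $|pp'|\le |p'q'|/(2s+2)$ and $|qq'|\le |p'q'|/(2s+2)$. $G$ is the graph after all pairs are processed. *)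

From HB Require Import structures.
From mathcomp Require Import all_boot all_order all_algebra.
From mathcomp Require Import reals exp.
Set Implicit Arguments. Unset Strict Implicit. Unset Printing Implicit Defensive.
Import Order.TTheory GRing.Theory Num.Theory.
Local Open Scope ring_scope.

Section UncoordinatedWSPD.
Variables (R : realType) (d n : nat).
Implicit Types (P : 'I_n -> 'rV[R]_d) (s : R).

Definition edist (u v : 'rV[R]_d) : R :=
  Num.sqrt (\sum_(k < d) (u ord0 k - v ord0 k) ^+ 2).

Definition lg (x : R) : R := ln x / ln 2.

Definition maxdist P : R :=
  \big[Num.max/0]_(i < n) \big[Num.max/0]_(j < n) edist (P i) (P j).
Definition mindist P : R :=
  \big[Num.min/maxdist P]_(i < n) \big[Num.min/maxdist P]_(j < n | j != i)
    edist (P i) (P j).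
Definition aspect_ratio P : R := maxdist P / mindist P.

Definition all_ordered_pairs : seq ('I_n * 'I_n) :=
  [seq pq <- [seq (i, j) | i <- enum 'I_n, j <- enum 'I_n] | pq.1 != pq.2].

Definition blocks P s (e : 'I_n * 'I_n) (p q : 'I_n) : bool :=
  let c := edist (P e.1) (P e.2) / (2 * s + 2) in
  ((edist (P p) (P e.1) <= c) && (edist (P q) (P e.2) <= c)) ||
  ((edist (P p) (P e.2) <= c) && (edist (P q) (P e.1) <= c)).

Definition process P s (E : seq ('I_n * 'I_n)) (pq : 'I_n * 'I_n) :=
  if has (fun e => blocks P s e pq.1 pq.2) E then E else rcons E pq.

Definition uncoord_graph P s (ord : seq ('I_n * 'I_n)) : seq ('I_n * 'I_n) :=
  foldl (process P s) [::] ord.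

(* the greedy WSPD pair (B_r(p), B_r(q)), r = |pq|/(2s+2), of edge e = pq
   contains point x in P_i \cup Q_i *)
Definition in_wspd_pair P s (x : 'I_n) (e : 'I_n * 'I_n) : bool :=
  let r := edist (P e.1) (P e.2) / (2 * s + 2) in
  (edist (P x) (P e.1) <= r) || (edist (P x) (P e.2) <= r).

End UncoordinatedWSPD.

From HB Require Import structures.
From mathcomp Require Import all_boot all_order all_algebra.
From mathcomp Require Import reals exp lra ring.
Import Order.TTheory GRing.Theory Num.Theory.
Local Open Scope ring_scope.
Set Implicit Arguments. Unset Strict Implicit. Unset Printing Implicit Defensive.

(* An edge enters G only if no earlier edge blocks it.  Sort the edges whose
   WSPD pair contains x into the 1 + lg α dyadic length classes [L, 2L) with
   L = mindist * 2^k.  Inside one class, orient each edge so that x lies in the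
   ball of its first endpoint: that endpoint is within O(L/s) of x and the other
   within O(L).  Snapping both endpoints to a grid of mesh L/((2s+2)d) centred
   at x, two edges with the same pair of cells would block one another, so a
   class has at most (4d+1)^d (23ds)^d = O(s^d) edges. *)

Section Euclidean.
Variables (R : realType) (d : nat).
Implicit Types u v : 'rV[R]_d.

Lemma edistC u v : edist u v = edist v u.
Proof. by rewrite /edist; congr Num.sqrt; apply: eq_bigr => k _; rewrite -sqrrN opprB. Qed.

Lemma coord_le_edist u v k : `|u ord0 k - v ord0 k| <= edist u v.
Proof.
rewrite /edist -sqrtr_sqr; apply: ler_wsqrtr.
by rewrite (bigD1 k) //= lerDl; apply: sumr_ge0 => i _; exact: sqr_ge0.
Qed.

Lemma edist_le_coord_bound u v (h : R) : 0 <= h ->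
  (forall k, `|u ord0 k - v ord0 k| <= h) -> edist u v <= d%:R * h.
Proof.
move=> h_ge0 uv_le; have dh_ge0 : 0 <= d%:R * h by rewrite mulr_ge0.
rewrite /edist -(ger0_norm dh_ge0) -sqrtr_sqr; apply: ler_wsqrtr.
apply: (@le_trans _ _ (\sum_(k < d) h ^+ 2)).
  apply: ler_sum => k _; rewrite -real_normK ?num_real //.
  by rewrite lerXn2r ?nnegrE ?normr_ge0.
rewrite sumr_const card_ord exprMn -[h ^+ 2 *+ d]mulr_natl; apply: ler_wpM2r; first exact: sqr_ge0.
by rewrite -natrX ler_nat; case: (d) => // m; rewrite leq_pmull.
Qed.

Lemma edist_gt0 u v : u != v -> 0 < edist u v.
Proof.
move=> u_neq_v; rewrite /edist sqrtr_gt0.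
have [k uk_neq_vk] : exists k, u ord0 k != v ord0 k.
  apply/existsP; apply: contraR u_neq_v => /existsPn uv_eq; apply/eqP/matrixP => i j.
  by rewrite (ord1 i); apply/eqP; move: (uv_eq j); rewrite negbK.
rewrite (bigD1 k) //=; apply: ltr_pwDl; last by apply: sumr_ge0 => i _; exact: sqr_ge0.
by rewrite lt_def sqr_ge0 andbT sqrf_eq0 subr_eq0.
Qed.

End Euclidean.

Section Grid.
Variables (R : realType) (d : nat) (c : 'rV[R]_d) (h : R) (A : nat).
Hypothesis h_gt0 : 0 < h.
Implicit Types (y z : 'rV[R]_d) (k : 'I_d).

(* The cubes of side [h] of a grid aligned with [c]; the shift by [A] makes
   the points of the box of half-side [A * h] around [c] use indices [0..2A]. *)
Definition grid_coord y k := Num.truncn ((y ord0 k - c ord0 k) / h + A%:R).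

Definition grid_cell y : {ffun 'I_d -> 'I_(2 * A).+1} :=
  [ffun k => inord (grid_coord y k)].

Definition in_box y := forall k, `|y ord0 k - c ord0 k| <= A%:R * h.

Lemma grid_coord_arg_ge0 y k : `|y ord0 k - c ord0 k| <= A%:R * h ->
  0 <= (y ord0 k - c ord0 k) / h + A%:R.
Proof.
rewrite -ler_pdivrMr // -[h in _ / h](gtr0_norm h_gt0) -normfV -normrM ler_norml.
by case/andP=> lo _; rewrite -lerBlDr sub0r.
Qed.

Lemma grid_coord_le y k : `|y ord0 k - c ord0 k| <= A%:R * h -> (grid_coord y k <= 2 * A)%N.
Proof.
rewrite -ler_pdivrMr // -[h in _ / h](gtr0_norm h_gt0) -normfV -normrM ler_norml.
by case/andP=> _ hi; rewrite /grid_coord truncn_le_nat -natr1 natrM -ltrBlDr; lra.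
Qed.

Lemma grid_coord_close y z k :
  `|y ord0 k - c ord0 k| <= A%:R * h -> `|z ord0 k - c ord0 k| <= A%:R * h ->
  grid_coord y k = grid_coord z k -> `|y ord0 k - z ord0 k| <= h.
Proof.
move=> /grid_coord_arg_ge0/truncn_itv + /grid_coord_arg_ge0/truncn_itv.
rewrite /grid_coord => + + yz_eq; rewrite yz_eq -natr1.
set a := (y ord0 k - c ord0 k) / h; set b := (z ord0 k - c ord0 k) / h.
move=> /andP[a_lo a_hi] /andP[b_lo b_hi].
have -> : y ord0 k - z ord0 k = (a - b) * h by rewrite /a /b; field; rewrite gt_eqF.
rewrite normrM (gtr0_norm h_gt0) -[X in _ <= X]mul1r ler_pM2r // ler_norml; apply/andP; split; lra.
Qed.

Lemma grid_cell_close y z : in_box y -> in_box z ->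
  grid_cell y = grid_cell z -> edist y z <= d%:R * h.
Proof.
move=> y_box z_box /ffunP yz_eq; apply: edist_le_coord_bound; first exact: ltW.
move=> k; apply: grid_coord_close => //; move: (yz_eq k); rewrite !ffunE.
by move/(congr1 (@nat_of_ord _)); rewrite !inordK // ltnS grid_coord_le.
Qed.

End Grid.

Section Construction.
Variables (R : realType) (d n : nat) (P : 'I_n -> 'rV[R]_d) (s : R).

Definition unblocked (e f : 'I_n * 'I_n) := ~~ blocks P s e f.1 f.2.

Lemma foldl_process_unblocked E ord :
  pairwise unblocked E -> pairwise unblocked (foldl (process P s) E ord).
Proof.
elim: ord E => [|pq ord IH] E //= E_unblocked; apply: IH.
rewrite /process; case: hasP => [//|no_blocker].
rewrite pairwise_rcons E_unblocked andbT; apply/allP => e e_in.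
by apply/negP => e_blocks; apply: no_blocker; exists e.
Qed.

Lemma uncoord_graph_unblocked ord : pairwise unblocked (uncoord_graph P s ord).
Proof. exact: foldl_process_unblocked. Qed.

Lemma foldl_process_sub E ord : {subset foldl (process P s) E ord <= E ++ ord}.
Proof.
elim: ord E => [|pq ord IH] E /=; first by rewrite cats0.
move=> e /IH; rewrite !mem_cat inE /process.
case: ifP => _; rewrite ?mem_rcons ?inE; first by case/orP=> ->; rewrite ?orbT.
by case/orP=> [/orP[]|] ->; rewrite ?orbT.
Qed.

Lemma uncoord_graph_edge_neq ord : perm_eq ord (all_ordered_pairs n) ->
  {in uncoord_graph P s ord, forall e, e.1 != e.2}.
Proof.
move=> ord_perm e /foldl_process_sub.
by rewrite cat0s (perm_mem ord_perm) mem_filter => /andP[].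
Qed.

End Construction.

Lemma lg_ge0 (R : realType) (a : R) : 1 <= a -> 0 <= lg a.
Proof. by move=> a_ge1; rewrite /lg divr_ge0 ?ln_ge0 // ler1n. Qed.

Lemma lt_pow2_truncn_lg (R : realType) (a : R) : 1 <= a -> a < 2 ^+ (Num.truncn (lg a)).+1.
Proof.
move=> a_ge1; have a_gt0 : 0 < a by apply: lt_le_trans a_ge1.
have ln2_gt0 : 0 < ln (2 : R) by rewrite ln_gt0 // ltr1n.
have pow_gt0 : 0 < (2 : R) ^+ (Num.truncn (lg a)).+1 by rewrite exprn_gt0.
rewrite -(ltr_ln a_gt0 pow_gt0) lnXn // -[ln _ *+ _]mulr_natl -ltr_pdivrMr //.
exact: truncnS_gt.
Qed.

Lemma pow2_bracket (R : realDomainType) (K : nat) (t : R) :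
  1 <= t -> t < 2 ^+ K.+1 -> exists2 k, (k <= K)%N & 2 ^+ k <= t < 2 ^+ k.+1.
Proof.
elim: K => [|K IH] t_ge1 t_lt; first by exists 0%N; rewrite ?expr0 ?t_ge1.
have [t_lt'|t_ge] := ltP t (2 ^+ K.+1); last by exists K.+1; rewrite ?t_ge.
by have [k k_le t_in] := IH t_ge1 t_lt'; exists k; rewrite ?(leqW k_le).
Qed.

Section AspectRatio.
Variables (R : realType) (d n : nat) (P : 'I_n -> 'rV[R]_d).

Lemma edist_le_maxdist i j : edist (P i) (P j) <= maxdist P.
Proof.
apply: le_trans (le_bigmax _ (fun i => \big[Num.max/0]_(j < n) edist (P i) (P j)) i).
exact: (le_bigmax _ (fun j => edist (P i) (P j)) j).
Qed.

Lemma mindist_le_edist i j : i != j -> mindist P <= edist (P i) (P j).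
Proof.
move=> i_neq_j; apply: le_trans
  (bigmin_le _ i (fun i => \big[Num.min/maxdist P]_(j < n | j != i) edist (P i) (P j))) _.
by apply: (bigmin_le_cond _ (P := fun j => j != i)); rewrite eq_sym.
Qed.

Hypotheses (n_ge2 : (2 <= n)%N) (P_inj : injective P).

Lemma edist_neq_gt0 i j : i != j -> 0 < edist (P i) (P j).
Proof. by move=> i_neq_j; apply: edist_gt0; apply: contra i_neq_j => /eqP/P_inj ->. Qed.

Let i0 : 'I_n := Ordinal (ltn_trans (ltnSn 0) n_ge2).
Let i1 : 'I_n := Ordinal n_ge2.

Lemma mindist_gt0 : 0 < mindist P.
Proof.
have maxdist_gt0 : 0 < maxdist P.
  by apply: lt_le_trans (edist_le_maxdist i0 i1); exact: edist_neq_gt0.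
apply: lt_bigmin => // i _; apply: lt_bigmin => // j j_neq_i.
by apply: edist_neq_gt0; rewrite eq_sym.
Qed.

Lemma aspect_ratio_ge1 : 1 <= aspect_ratio P.
Proof.
rewrite /aspect_ratio ler_pdivlMr ?mindist_gt0 // mul1r.
exact: le_trans (mindist_le_edist (isT : i0 != i1)) (edist_le_maxdist _ _).
Qed.

Lemma dyadic_scale i j : i != j ->
  exists2 k, (k <= Num.truncn (lg (aspect_ratio P)))%N &
    mindist P * 2 ^+ k <= edist (P i) (P j) < 2 * (mindist P * 2 ^+ k).
Proof.
move=> i_neq_j; have m_gt0 := mindist_gt0.
have t_ge1 : 1 <= edist (P i) (P j) / mindist P.
  by rewrite ler_pdivlMr // mul1r mindist_le_edist.
have t_lt : edist (P i) (P j) / mindist P < 2 ^+ (Num.truncn (lg (aspect_ratio P))).+1.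
  apply: le_lt_trans (lt_pow2_truncn_lg aspect_ratio_ge1).
  by rewrite ler_pM2r ?invr_gt0 ?edist_le_maxdist.
have [k k_le /andP[lo hi]] := pow2_bracket t_ge1 t_lt.
exists k => //; rewrite mulrC -ler_pdivlMr // lo /=.
by rewrite mulrA -exprS -ltr_pdivrMr.
Qed.

End AspectRatio.

Definition packing_const (d : nat) := ((4 * d + 1) ^ d * (23 * d) ^ d)%N.

Lemma grid_width_le (R : realFieldType) (s a e : R) :
  1 < s -> 1 <= e -> a <= (4 * s + 6) * e + 1 -> 2 * a + 1 <= 23 * e * s.
Proof. nra. Qed.

Section OneScale.
Variables (R : realType) (d n : nat) (P : 'I_n -> 'rV[R]_d) (s : R) (x : 'I_n) (L : R).
Hypotheses (d_gt0 : (0 < d)%N) (s_gt1 : 1 < s) (L_gt0 : 0 < L).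
Implicit Types e f : 'I_n * 'I_n.

Definition at_scale e :=
  [&& in_wspd_pair P s x e, L <= edist (P e.1) (P e.2) & edist (P e.1) (P e.2) < 2 * L].

Definition orient e : 'I_n * 'I_n :=
  if edist (P x) (P e.1) <= edist (P e.1) (P e.2) / (2 * s + 2) then e else (e.2, e.1).

Lemma orient_edist e : edist (P (orient e).1) (P (orient e).2) = edist (P e.1) (P e.2).
Proof. by rewrite /orient; case: ifP => //= _; rewrite edistC. Qed.

Lemma orient_near e : in_wspd_pair P s x e ->
  edist (P x) (P (orient e).1) <= edist (P e.1) (P e.2) / (2 * s + 2).
Proof. by rewrite /in_wspd_pair /orient; case: ifP => //= _ /orP[] //; rewrite edistC. Qed.

Let s_gt0 : 0 < s. Proof. exact: lt_trans ltr01 s_gt1. Qed.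
Let s2_gt0 : 0 < 2 * s + 2. Proof. by rewrite addr_gt0 ?mulr_gt0. Qed.
Let del := L / (2 * s + 2).
(* A grid cell has diameter at most [del], the least blocking radius of an edge
   of length at least [L]. *)
Let h := del / d%:R.
Let h_gt0 : 0 < h. Proof. by rewrite !divr_gt0 // ltr0n. Qed.
Let d_h : d%:R * h = del. Proof. by rewrite /h mulrC divfK // pnatr_eq0 -lt0n. Qed.
(* [x] is within [2 del] of the near endpoint of an edge at this scale and
   within [2 L + 2 del = (4s+6) del] of the far one. *)
Let A1 := (2 * d)%N.
Let A2 := (Num.truncn ((4 * s + 6) * d%:R)).+1.

Definition scale_cells e :=
  (grid_cell (P x) h A1 (P (orient e).1), grid_cell (P x) h A2 (P (orient e).2)).

Lemma at_scale_in_box e : at_scale e ->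
  in_box (P x) h A1 (P (orient e).1) /\ in_box (P x) h A2 (P (orient e).2).
Proof.
case/and3P=> x_near _ len_lt; have near1 := orient_near x_near.
have rad_le : edist (P e.1) (P e.2) / (2 * s + 2) <= 2 * del.
  by rewrite /del mulrA ler_pM2r ?invr_gt0 // ltW.
have coord1 k : `|P (orient e).1 ord0 k - P x ord0 k| <= 2 * del.
  by apply: le_trans (coord_le_edist _ _ _) _; rewrite edistC (le_trans near1).
split=> k; first by rewrite /A1 natrM -mulrA d_h.
have coord12 : `|P (orient e).2 ord0 k - P (orient e).1 ord0 k| <= 2 * L.
  by apply: le_trans (coord_le_edist _ _ _) _; rewrite edistC orient_edist ltW.
apply: le_trans (_ : 2 * L + 2 * del <= _).
  rewrite -[_ - P x ord0 k](subrKA (P (orient e).1 ord0 k)).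
  by apply: le_trans (ler_normD _ _) _; apply: lerD.
have -> : 2 * L + 2 * del = (4 * s + 6) * d%:R * h.
  by rewrite -mulrA d_h /del; field; rewrite gt_eqF.
by rewrite ler_pM2r // ltW // truncnS_gt.
Qed.

Lemma same_cells_blocks e f : at_scale e -> at_scale f ->
  scale_cells e = scale_cells f -> blocks P s e f.1 f.2.
Proof.
move=> e_scale f_scale [cells1 cells2].
have [e_box1 e_box2] := at_scale_in_box e_scale.
have [f_box1 f_box2] := at_scale_in_box f_scale.
have del_le : del <= edist (P e.1) (P e.2) / (2 * s + 2).
  by case/and3P: e_scale => _ L_le _; rewrite ler_pM2r ?invr_gt0.
have close1 := grid_cell_close h_gt0 f_box1 e_box1 (esym cells1).
have close2 := grid_cell_close h_gt0 f_box2 e_box2 (esym cells2).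
rewrite d_h in close1 close2; move: (le_trans close1 del_le) (le_trans close2 del_le).
by rewrite /blocks /orient /=; case: ifP => _; case: ifP => _ /= -> ->; rewrite ?orbT.
Qed.

Lemma count_at_scale_le_card G : pairwise (unblocked P s) G ->
  (count at_scale G <= #|{: {ffun 'I_d -> 'I_(2 * A1).+1} * {ffun 'I_d -> 'I_(2 * A2).+1}}|)%N.
Proof.
move=> G_unblocked; rewrite -size_filter -(size_map scale_cells).
suff /card_uniqP <- : uniq (map scale_cells (filter at_scale G)) by exact: max_card.
rewrite uniq_pairwise pairwise_map.
apply: (sub_in_pairwise (P := at_scale) (r := unblocked P s)); last exact: pairwise_filter.
  move=> e f e_scale f_scale; rewrite /unblocked /=; apply: contra => /eqP.
  exact: same_cells_blocks.
by apply/allP => e; rewrite mem_filter => /andP[].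
Qed.

Lemma count_at_scale_le G : pairwise (unblocked P s) G ->
  (count at_scale G)%:R <= (packing_const d)%:R * s ^+ d.
Proof.
move=> /count_at_scale_le_card; rewrite card_prod !card_ffun !card_ord -(ler_nat R) => cnt_le.
apply: le_trans cnt_le _; rewrite /packing_const /A1 mulnA addn1 !natrM !natrX -mulrA.
apply: ler_wpM2l; first exact: exprn_ge0.
rewrite -exprMn; apply: lerXn2r; rewrite ?nnegrE ?mulr_ge0 ?(ltW s_gt0) //.
have A2_le : A2%:R <= (4 * s + 6) * d%:R + 1.
  by rewrite /A2 -natr1 lerD2r truncn_le mulr_ge0 // addr_ge0 ?mulr_ge0 // ltW.
by rewrite -natr1 !natrM; apply: grid_width_le; rewrite ?ler1n.
Qed.

End OneScale.

Lemma count_le_sum_count (T : eqType) (K : nat) (a : pred T) (b : 'I_K -> pred T) (l : seq T) :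
  {in l, forall e, a e -> exists k, b k e} -> (count a l <= \sum_(k < K) count (b k) l)%N.
Proof.
elim: l => [|e l IH] /= cover; first by rewrite big1.
rewrite big_split /= leq_add ?IH //; last by move=> f f_in; apply: cover; rewrite inE f_in orbT.
case a_e: (a e) => //; have [k b_e] := cover e (mem_head e l) a_e.
by rewrite (bigD1 k) //= b_e.
Qed.

Theorem theorem14 :
  forall d : nat, (1 <= d)%N ->
  exists C : nat,
  forall (R : realType) (n : nat) (P : 'I_n -> 'rV[R]_d) (s : R)
         (ord : seq ('I_n * 'I_n)),
    (2 <= n)%N -> injective P -> 1 < s ->
    perm_eq ord (all_ordered_pairs n) ->
    forall x : 'I_n,
      (count (in_wspd_pair P s x) (uncoord_graph P s ord))%:R
        <= C%:R * s ^+ d * (1 + lg (aspect_ratio P)).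
Proof.
move=> d d_gt0; exists (packing_const d) => R n P s ord n_ge2 P_inj s_gt1 ord_perm x.
set G := uncoord_graph P s ord; set m := mindist P.
set K := Num.truncn (lg (aspect_ratio P)).
have count_le_scales : (count (in_wspd_pair P s x) G
    <= \sum_(k < K.+1) count (at_scale P s x (m * 2 ^+ k)) G)%N.
  apply: count_le_sum_count => e /(uncoord_graph_edge_neq ord_perm) e_neq x_near.
  have [k k_le len_k] := dyadic_scale n_ge2 P_inj e_neq.
  by exists (Ordinal (k_le : k < K.+1)%N); rewrite /at_scale x_near.
apply: le_trans (_ : (\sum_(k < K.+1) (packing_const d)%:R * s ^+ d) <= _).
  rewrite -(ler_nat R) natr_sum in count_le_scales; apply: le_trans count_le_scales _.
  apply: ler_sum => k _; apply: count_at_scale_le => //; last exact: uncoord_graph_unblocked.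
  by rewrite mulr_gt0 ?mindist_gt0 ?exprn_gt0.
rewrite sumr_const card_ord -[_ *+ K.+1]mulr_natr; apply: ler_wpM2l.
  by rewrite mulr_ge0 ?exprn_ge0 // ltW // (lt_trans ltr01 s_gt1).
by rewrite -natr1 addrC lerD2l truncn_le lg_ge0 ?aspect_ratio_ge1.
Qed.
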